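(* Let $n \geq 3$ and let $\Omega = \bigcap_{m=0}^q \{u_m \leq 0\} \subset \mathbb{R}^n$ be a compact convex polytope with non-empty interior satisfying the standing assumptions described in the context. Let $\Lambda > 1$ be a constant such that for every $x \in \Omega$ and all nonnegative reals $a_0,\dots,a_q$ with $a_i = 0$ whenever $u_i(x) \leq -2\Lambda^{-1}$, one has $\sum_{i=0}^q a_i \leq \Lambda |\sum_{i=0}^q a_i N_i|$. Then there exists a constant $\Xi \in (2\Lambda,\infty)$ with the following property: whenever $1 \leq k \leq q$, $x \in \Omega$ satisfies $-2\Xi^{-1} \leq u_k(x) \leq 0$, and $a_0,\dots,a_{k-1}$ are nonnegative real numbers such that $a_i = 0$ for all $0 \leq i \leq k-1$ with $u_i(x) \leq -2\Xi^{-1}$, we have \[\sum_{i=0}^{k-1} a_i \leq \Xi \, \Big| \Big( \sum_{i=0}^{k-1} a_i N_i \Big) \wedge N_k \Big|.\]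
   Context: Here $u_0,\dots,u_q$ are non-constant linear (affine) functions on $\mathbb{R}^n$ and $\Omega = \bigcap_{m=0}^q\{u_m\le 0\}$ is compact, convex, with non-empty interior. Standing assumptions: (a) for each $k$, the set $\{u_k>0\}\cap\bigcap_{m\neq k}\{u_m\le 0\}$ is non-empty; (b) the Euclidean gradient of each $u_k$ is a unit vector $N_k\in S^{n-1}$; (c) for $0\le j<k\le q$, if there exists $x\in\Omega$ with $u_j(x)=u_k(x)=0$, then $\langle N_j,N_k\rangle\le 0$. For vectors $v,w\in\mathbb{R}^n$, $|v\wedge w|$ denotes the Euclidean norm of the bivector, i.e. $|v\wedge w|^2=|v|^2|w|^2-\langle v,w\rangle^2$. *)

From HB Require Import structures.
From mathcomp Require Import all_boot all_order all_algebra.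
From mathcomp Require Import all_classical all_reals all_analysis.
Set Implicit Arguments. Unset Strict Implicit. Unset Printing Implicit Defensive.
Import Order.TTheory GRing.Theory Num.Theory.
Import numFieldNormedType.Exports.
Local Open Scope ring_scope.
Local Open Scope classical_set_scope.

Definition dotp (R : realType) (n : nat) (v w : 'rV[R]_n) : R :=
  \sum_(i < n) v ord0 i * w ord0 i.

Definition enorm (R : realType) (n : nat) (v : 'rV[R]_n) : R :=
  Num.sqrt (dotp v v).

(* Euclidean norm of the bivector v /\ w: |v^w|^2 = |v|^2|w|^2 - <v,w>^2. *)
Definition wedge_norm (R : realType) (n : nat) (v w : 'rV[R]_n) : R :=
  Num.sqrt (dotp v v * dotp w w - (dotp v w) ^+ 2).

(* The affine function u_m(x) = <N_m, x> + c_m ; its Euclidean gradient is N_m. *)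
Definition aff (R : realType) (n : nat) (N : 'rV[R]_n) (c : R) (x : 'rV[R]_n) : R :=
  dotp N x + c.

Definition Omega (R : realType) (n q : nat) (N : 'I_q.+1 -> 'rV[R]_n)
  (c : 'I_q.+1 -> R) : set 'rV[R]_n :=
  [set x | forall m, aff (N m) (c m) x <= 0].

From HB Require Import structures.
From mathcomp Require Import all_boot all_order all_algebra.
From mathcomp Require Import all_classical all_reals all_analysis.
From mathcomp Require Import lra ring.
Set Implicit Arguments. Unset Strict Implicit. Unset Printing Implicit Defensive.
Import Order.TTheory GRing.Theory Num.Theory.
Import numFieldNormedType.Exports.
Local Open Scope ring_scope.
Local Open Scope classical_set_scope.

(* Compactness of Omega gives e > 0 such that two faces u_j = 0, u_k = 0 which
   both come e-close to a common point of Omega actually meet, so that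
   <N_j, N_k> <= 0 by (c).  Taking Xi >= 2/e, every N_i with a_i > 0 is then
   obtuse to N_k, hence v = sum a_i N_i satisfies <v, N_k> <= 0.  Adding the
   coefficient s = -<v, N_k> >= 0 at N_k is allowed by the Lambda hypothesis,
   and |v + s N_k| = |v /\ N_k| since N_k is a unit vector; this gives
   sum a_i <= sum a_i + s <= Lambda |v /\ N_k|. *)

Section DotProduct.
Variables (R : realType) (n : nat).
Implicit Types (u v w : 'rV[R]_n) (a : R).

Lemma dotpC u w : dotp u w = dotp w u.
Proof. by apply: eq_bigr => i _; rewrite mulrC. Qed.

Lemma dotpDl u v w : dotp (u + v) w = dotp u w + dotp v w.
Proof. by rewrite /dotp -big_split; apply: eq_bigr => i _; rewrite mxE mulrDl. Qed.

Lemma dotpZl a u w : dotp (a *: u) w = a * dotp u w.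
Proof. by rewrite /dotp mulr_sumr; apply: eq_bigr => i _; rewrite mxE mulrA. Qed.

Lemma dotpDr u v w : dotp u (v + w) = dotp u v + dotp u w.
Proof. by rewrite dotpC dotpDl !(dotpC u). Qed.

Lemma dotpZr a u w : dotp u (a *: w) = a * dotp u w.
Proof. by rewrite dotpC dotpZl dotpC. Qed.

Lemma dotp_suml (I : finType) (P : pred I) (f : I -> 'rV[R]_n) w :
  dotp (\sum_(i | P i) f i) w = \sum_(i | P i) dotp (f i) w.
Proof.
apply: (big_morph (fun u => dotp u w)) => [u v|]; first exact: dotpDl.
by rewrite /dotp big1 // => i _; rewrite mxE mul0r.
Qed.

Lemma dotp_ge0 u : 0 <= dotp u u.
Proof. by apply: sumr_ge0 => i _; rewrite -expr2 sqr_ge0. Qed.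

Lemma enorm_eq1 u : enorm u = 1 -> dotp u u = 1.
Proof. by rewrite /enorm => u1; rewrite -(sqr_sqrtr (dotp_ge0 u)) u1 expr1n. Qed.

Lemma wedge_normE v w : dotp w w = 1 ->
  wedge_norm v w = enorm (v - dotp v w *: w).
Proof.
move=> w1; rewrite /enorm /wedge_norm; congr Num.sqrt.
by rewrite -[in RHS]scaleNr !(dotpDl, dotpDr, dotpZl, dotpZr) (dotpC w v) w1; ring.
Qed.

Lemma aff_continuous (N : 'rV[R]_n) (c : R) : continuous (aff N c).
Proof.
move=> x; apply: continuousD; last exact: cst_continuous.
rewrite /dotp -fct_sumE.
elim/big_ind: _ => [|f g|i _]; first exact: cst_continuous.
  by move=> cf cg; apply: continuousD.
by apply: continuousM; [exact: cst_continuous | exact: coord_continuous].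
Qed.

End DotProduct.

Lemma compact_max_ge0 (T : topologicalType) (R : realType) (K : set T) (f : T -> R) :
  compact K -> {within K, continuous f} ->
  (forall e, 0 < e -> exists2 x, K x & - e <= f x) -> exists2 x, K x & 0 <= f x.
Proof.
move=> Kc fc approx; have [x0 Kx0 _] := approx 1 ltr01.
have [m /set_mem Km fm_max] := compact_EVT_max (ex_intro _ x0 Kx0) Kc fc.
exists m => //; rewrite leNgt; apply/negP => fm_lt0.
have [x Kx] : exists2 x, K x & - (- f m / 2) <= f x.
  by apply: approx; rewrite divr_gt0 // oppr_gt0.
by have := fm_max x (mem_set Kx); lra.
Qed.

Lemma sum_extend_at (V : zmodType) q (g : 'I_q.+1 -> V) (k : 'I_q.+1) (h : V) :
  \sum_(i : 'I_q.+1) (if (i < k)%N then g i else if i == k then h else 0)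
  = \sum_(i < q.+1 | (i < k)%N) g i + h.
Proof.
rewrite (bigID (fun i : 'I_q.+1 => (i < k)%N)) /=; congr (_ + _).
  by apply: eq_bigr => i ->.
rewrite (bigD1 k) ?ltnn //= eqxx big1 ?addr0 //.
by move=> i /andP[/negbTE -> /negbTE ->].
Qed.

Section Polytope.
Variables (R : realType) (n q : nat) (N : 'I_q.+1 -> 'rV[R]_n) (c : 'I_q.+1 -> R).
Local Notation u m := (aff (N m) (c m)).
Local Notation Omega := (Omega N c).
Hypothesis Omega_compact : compact Omega.

Lemma faces_meet j k :
    (forall e, 0 < e -> exists2 x, Omega x & - e <= u j x /\ - e <= u k x) ->
  exists2 x, Omega x & u j x = 0 /\ u k x = 0.
Proof.
move=> approx.
have [||x Ox] := @compact_max_ge0 _ _ _ (u j \min u k) Omega_compact.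
- by move=> x; apply: continuous_subspaceT => y; apply: continuous_min; apply: aff_continuous.
- move=> e e_gt0; have [x Ox [ujx ukx]] := approx e e_gt0.
  by exists x => //=; rewrite le_min ujx ukx.
rewrite /= le_min => /andP[ujx ukx].
by exists x => //; split; apply/le_anti; rewrite ?ujx ?ukx Ox.
Qed.

Hypothesis meeting_faces_dotp_le0 : forall j k : 'I_q.+1, (j < k)%N ->
  (exists2 x, Omega x & u j x = 0 /\ u k x = 0) -> dotp (N j) (N k) <= 0.

Definition obtuse_within (e : R) (j k : 'I_q.+1) := (j < k)%N ->
  forall x, Omega x -> - e <= u j x -> - e <= u k x -> dotp (N j) (N k) <= 0.

Lemma near_obtuse_within j k : \forall e \near 0^'+, obtuse_within e j k.
Proof.
rewrite /obtuse_within; have [jk|_] := ltnP j k; last exact: filterE.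
have [approx|] := pselect (forall e, 0 < e ->
  exists2 x, Omega x & - e <= u j x /\ - e <= u k x).
  by apply: filterE => e _ x _ _ _; exact: (meeting_faces_dotp_le0 jk (faces_meet approx)).
move=> /existsNP[e1 /not_implyP[e1_gt0 far]].
apply: filterS (nbhs_right_le e1_gt0) => e e_le _ x Ox ujx ukx; exfalso.
by apply: far; exists x => //; split; apply: le_trans _ (_ : - e <= _); rewrite ?lerN2.
Qed.

Lemma exists_obtuse_within : exists2 e, 0 < e & forall j k, obtuse_within e j k.
Proof.
have /(filterI (nbhs_right_gt 0))/filter_ex[e [e_gt0 He]] :
    \forall e \near 0^'+, forall jk : 'I_q.+1 * 'I_q.+1, obtuse_within e jk.1 jk.2.
  by apply: filter_forall => jk; exact: near_obtuse_within.
by exists e => // j k; exact: He (j, k).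
Qed.

Lemma obtuse_within_dotp_sum_le0 e k x (a : 'I_q.+1 -> R) :
  (forall i j, obtuse_within e i j) -> Omega x -> - e <= u k x ->
  (forall i : 'I_q.+1, (i < k)%N -> 0 <= a i) ->
  (forall i : 'I_q.+1, (i < k)%N -> u i x < - e -> a i = 0) ->
  dotp (\sum_(i < q.+1 | (i < k)%N) a i *: N i) (N k) <= 0.
Proof.
move=> obtuse Ox ukx a_ge0 a_far; rewrite dotp_suml.
apply: sumr_le0 => i ik; rewrite dotpZl.
have [uix|uix] := ltP (u i x) (- e); first by rewrite a_far // mul0r.
exact: mulr_ge0_le0 (a_ge0 i ik) (obtuse i k ik x Ox uix ukx).
Qed.

Definition normal_cone_bound (L : R) := forall x, Omega x ->
  forall b : 'I_q.+1 -> R, (forall i, 0 <= b i) ->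
  (forall i, u i x <= - (2 / L) -> b i = 0) ->
  \sum_i b i <= L * enorm (\sum_i b i *: N i).

Lemma normal_cone_bound_wedge L k x (a : 'I_q.+1 -> R) :
  (forall m, enorm (N m) = 1) -> normal_cone_bound L ->
  Omega x -> - (2 / L) < u k x ->
  (forall i : 'I_q.+1, (i < k)%N -> 0 <= a i) ->
  (forall i : 'I_q.+1, (i < k)%N -> u i x <= - (2 / L) -> a i = 0) ->
  dotp (\sum_(i < q.+1 | (i < k)%N) a i *: N i) (N k) <= 0 ->
  \sum_(i < q.+1 | (i < k)%N) a i
    <= L * wedge_norm (\sum_(i < q.+1 | (i < k)%N) a i *: N i) (N k).
Proof.
move=> N_unit bound Ox ukx a_ge0 a_far.
set v := \sum_(i < q.+1 | _) _; rewrite -oppr_ge0; set s := - dotp v (N k) => s_ge0.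
pose b (i : 'I_q.+1) := if (i < k)%N then a i else if i == k then s else 0.
have b_ge0 i : 0 <= b i.
  by rewrite /b; case: ifPn => [/a_ge0 //|_]; case: ifP.
have b_far i : u i x <= - (2 / L) -> b i = 0.
  rewrite /b; case: ifPn => [ik /(a_far i ik) //|_].
  by case: eqP => // -> ukx_le; move: ukx; rewrite ltNge ukx_le.
have := bound x Ox b b_ge0 b_far; rewrite sum_extend_at.
have -> : \sum_i b i *: N i = v + s *: N k.
  rewrite -sum_extend_at; apply: eq_bigr => i _; rewrite /b.
  by case: ifP => // _; case: eqP => [-> | _]; rewrite ?scale0r.
by rewrite scaleNr -wedge_normE ?enorm_eq1 //; apply: le_trans; rewrite lerDl.
Qed.

End Polytope.

Theorem lemma2p4 (R : realType) (n q : nat)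
  (N : 'I_q.+1 -> 'rV[R]_n) (c : 'I_q.+1 -> R) (Lambda : R) :
  (3 <= n)%N ->
  (* Omega compact, convex, with non-empty interior *)
  compact (Omega N c) ->
  convex_set (Omega N c : set (convex_lmodType 'rV[R]_n)) ->
  (interior (Omega N c) !=set0) ->
  (* standing assumption (a) *)
  (forall k : 'I_q.+1, exists x : 'rV[R]_n,
      0 < aff (N k) (c k) x /\ forall m, m != k -> aff (N m) (c m) x <= 0) ->
  (* standing assumption (b): gradients are unit vectors *)
  (forall k, enorm (N k) = 1) ->
  (* standing assumption (c) *)
  (forall j k : 'I_q.+1, (j < k)%N ->
      (exists2 x, Omega N c x & aff (N j) (c j) x = 0 /\ aff (N k) (c k) x = 0) ->
      dotp (N j) (N k) <= 0) ->
  1 < Lambda ->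
  (forall x, Omega N c x -> forall a : 'I_q.+1 -> R,
      (forall i, 0 <= a i) ->
      (forall i, aff (N i) (c i) x <= - (2 / Lambda) -> a i = 0) ->
      \sum_i a i <= Lambda * enorm (\sum_i a i *: N i)) ->
  exists Xi : R, 2 * Lambda < Xi /\
    forall (k : 'I_q.+1), (1 <= k)%N ->
    forall x, Omega N c x ->
      - (2 / Xi) <= aff (N k) (c k) x -> aff (N k) (c k) x <= 0 ->
    forall a : 'I_q.+1 -> R,
      (forall i : 'I_q.+1, (i < k)%N -> 0 <= a i) ->
      (forall i : 'I_q.+1, (i < k)%N -> aff (N i) (c i) x <= - (2 / Xi) -> a i = 0) ->
      \sum_(i < q.+1 | (i < k)%N) a i
        <= Xi * wedge_norm (\sum_(i < q.+1 | (i < k)%N) a i *: N i) (N k).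
Proof.
move=> _ Omega_compact _ _ _ N_unit meeting_faces_dotp_le0 L_gt1 bound.
have [e e_gt0 obtuse] := exists_obtuse_within Omega_compact meeting_faces_dotp_le0.
pose Xi := 2 * Lambda + 1 + 2 / e.
have e2_gt0 : 0 < 2 / e by rewrite divr_gt0.
have Xi_gt0 : 0 < Xi by rewrite /Xi; lra.
have Xi_gap_le : 2 / Xi <= e.
  rewrite ler_pdivrMr // /Xi mulrDr (mulrC e (2 / e)) divfK ?gt_eqF //.
  by rewrite lerDr mulr_ge0 //; lra.
have Xi_gap_lt : 2 / Xi < 2 / Lambda.
  by rewrite ltr_pM2l // ltf_pV2 ?posrE /Xi; lra.
exists Xi; split; first by rewrite /Xi; lra.
move=> k _ x Ox ukx _ a a_ge0 a_far.
have a_far_Lambda (i : 'I_q.+1) : (i < k)%N -> aff (N i) (c i) x <= - (2 / Lambda) -> a i = 0.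
  by move=> ik uix; apply: a_far ik (le_trans uix _); rewrite lerN2 ltW.
apply: le_trans (normal_cone_bound_wedge N_unit bound Ox _ a_ge0 a_far_Lambda _) _.
- by apply: lt_le_trans ukx; rewrite ltrN2.
- apply: obtuse_within_dotp_sum_le0 obtuse Ox (le_trans _ ukx) a_ge0 _; first by rewrite lerN2.
  by move=> i ik uix; apply: a_far ik (le_trans (ltW uix) _); rewrite lerN2.
- by rewrite ler_wpM2r ?sqrtr_ge0 // /Xi; lra.
Qed.
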